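(* Let $\ell\ge1$ and $N$ be integers and let $f:\binom{[N]}{2}\to\binom{[N]}{\ell}$ satisfy $f(e)\cap e=\emptyset$ for all $e\in\binom{[N]}{2}$. Let $X\subseteq[N]$ be the set of $x\in[N]$ such that $x\in f(e)$ for at most $\ell N$ pairs $e\in\binom{[N]}{2}$. Let $G$ be a graph with $n$ vertices and $m$ edges, where $m$ is a perfect square, $n/\sqrt m=2^T$ for a positive integer $T$, and fewer than $n/2$ vertices of $G$ are isolated. Let $u_1,\dots,u_n$, $\prec$, $U_0,\dots,U_T$ and the Embedding Algorithm be as described in the context. Suppose $X_0',\dots,X_T'\subseteq X$ are pairwise disjoint sets satisfying properties (P1), (P2), (P3) of the context. Then there are subsets $X_j\subseteq X_j'$, $0\le j\le T$, such that the Embedding Algorithm with input $t=T$ and $X_0,\dots,X_T$ does not fail and returns an injection $\varphi:V(G)\to X$ satisfying $f(\{\varphi(v),\varphi(u)\})\cap\varphi(V(G))=\emptyset$ for every edge $vu\in E(G)$.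
   Context: Setup. $[N]=\{1,\dots,N\}$, $\binom{[N]}{k}$ is the family of $k$-subsets. Order $V(G)$ as $u_1,\dots,u_n$ with $d(u_1)\ge\dots\ge d(u_n)$ (degrees in $G$), and write $u_i\prec u_j$ iff $i<j$. Let $U_0=\{u_i:1\le i\le\sqrt m\}$ and for $1\le j\le T$ let $U_j=\{u_i:\sqrt m\,2^{j-1}<i\le\sqrt m\,2^j\}$. For sets $A_0,\dots,A_T$ write $A_{\le j}=A_0\cup\dots\cup A_j$. Embedding Algorithm. Input: $t\in\{0,\dots,T\}$ and pairwise disjoint $X_0,\dots,X_t\subseteq X$. Go over $j=0,\dots,t$ in order, and for each $j$ over the vertices $u\in U_j$ in the order $\prec$. For such $u$, let $X_u$ be the set of $x\in X_j$ such that: (a) $x\ne\varphi(v)$ for every $v\prec u$; (b) $x\notin f(\{\varphi(v),\varphi(w)\})$ for every edge $vw\in E(G)$ with $v,w\in U_0\cup\dots\cup U_{j-1}$; (c) for every neighbour $v$ of $u$ with $v\prec u$, $f(\{\varphi(v),x\})\cap X_{\le j}=\emptyset$. If $X_u=\emptyset$, stop and report failure; otherwise set $\varphi(u)$ to be the smallest element of $X_u$ (in the natural order of $[N]$). If it does not fail, the output is the map $\varphi:U_{\le t}\to X_{\le t}$. Properties of disjoint sets $X_0',\dots,X_T'\subseteq X$: (P1) $3.9|U_j|<|X_j'|<4.1|U_j|$ for all $0\le j\le T$. (P2) For each $j\in\{0,\dots,T-1\}$ and every choice of subsets $X_i\subseteq X_i'$ ($0\le i\le j$), if the Embedding Algorithm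 with input $t=j$ and $X_0,\dots,X_j$ does not fail and outputs $\varphi$, then the set $L=\bigcup f(\{\varphi(v),\varphi(u)\})$, the union over all edges $vu\in E(G)$ with $v,u\in U_{\le j}$, satisfies $|L\cap X_{j+1}'|\le|X_{j+1}'|/9$. (P3) For all $0\le i\le j\le T$, the number $r_{i,j}$ of pairs of distinct vertices $(x,y)\in X_i'\times X_j'$ with $f(\{x,y\})\cap X'_{\le j}\neq\emptyset$ satisfies $r_{i,j}\le|U_i||U_j|^2/(5m)$. *)

From mathcomp Require Import all_boot.
Set Implicit Arguments. Unset Strict Implicit. Unset Printing Implicit Defensive.

(* Vertex indices are 0-based: u i for i : 'I_n stands for u_{i+1} of the paper.
   Elements of [N] are represented by 'I_N (order-preserving shift by one). *)

(* i (0-based) is the index of a vertex of U_j, where s = sqrt m. *)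
Definition inU (s j i : nat) : bool :=
  if j is j'.+1 then (s * 2 ^ j' <= i) && (i < s * 2 ^ j) else i < s.

Definition Uset (V : finType) (n : nat) (u : 'I_n -> V) (s j : nat) : {set V} :=
  [set v | [exists i : 'I_n, (u i == v) && inU s j i]].

Definition Ule (V : finType) (n : nat) (u : 'I_n -> V) (s j : nat) : {set V} :=
  \bigcup_(i < j.+1) Uset u s i.
Definition Ult (V : finType) (n : nat) (u : 'I_n -> V) (s j : nat) : {set V} :=
  \bigcup_(i < j) Uset u s i.

Definition prec (V : finType) (n : nat) (u : 'I_n -> V) (v w : V) : bool :=
  [exists i : 'I_n, exists k : 'I_n, [&& u i == v, u k == w & i < k]].

Definition Xle (N : nat) (Xs : nat -> {set 'I_N}) (j : nat) : {set 'I_N} :=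
  \bigcup_(i < j.+1) Xs i.

Definition deg (V : finType) (E : rel V) (v : V) : nat := #|[set w | E v w]|.

Definition edges (V : finType) (E : rel V) : {set {set V}} :=
  [set e : {set V} | [exists v, exists w, E v w && (e == [set v; w])]].

Definition Xgood (N l : nat) (f : {set 'I_N} -> {set 'I_N}) : {set 'I_N} :=
  [set x : 'I_N | #|[set e : {set 'I_N} | (#|e| == 2) && (x \in f e)]| <= l * N].

(* Conditions (a), (b), (c) for candidate x for vertex w in part j, given the
   partial embedding phi (None = not yet embedded). *)
Definition cand (N : nat) (V : finType) (n : nat) (u : 'I_n -> V) (E : rel V)
  (f : {set 'I_N} -> {set 'I_N}) (s : nat) (Xs : nat -> {set 'I_N}) (j : nat)
  (phi : V -> option 'I_N) (w : V) (x : 'I_N) : bool :=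
  [&& [forall v, prec u v w ==> (phi v != Some x)],
      [forall v, forall v',
         [&& E v v', v \in Ult u s j & v' \in Ult u s j] ==>
         match phi v, phi v' with
         | Some a, Some b => x \notin f [set a; b]
         | _, _ => true
         end] &
      [forall v, (E v w && prec u v w) ==>
         match phi v with
         | Some a => [disjoint f [set a; x] & Xle Xs j]
         | None => true
         end]].

Definition emb_step (N : nat) (V : finType) (n : nat) (u : 'I_n -> V) (E : rel V)
  (f : {set 'I_N} -> {set 'I_N}) (s : nat) (Xs : nat -> {set 'I_N}) (j : nat)
  (st : option (V -> option 'I_N)) (i : 'I_n) : option (V -> option 'I_N) :=
  if st is Some phi then
    let w := u i in
    match [seq x <- enum 'I_N | (x \in Xs j) && cand u E f s Xs j phi w x] with
    | [::] => None
    | x :: _ => Some (fun v => if v == w then Some x else phi v)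
    end
  else None.

(* The Embedding Algorithm with input t and X_0, ..., X_t (only Xs 0..t used).
   None = failure; Some phi = output (phi v = Some (image) for v in U_{<= t}). *)
Definition Emb (N : nat) (V : finType) (n : nat) (u : 'I_n -> V) (E : rel V)
  (f : {set 'I_N} -> {set 'I_N}) (s : nat) (Xs : nat -> {set 'I_N}) (t : nat)
  : option (V -> option 'I_N) :=
  foldl (fun st j => foldl (emb_step u E f s Xs j) st [seq i : 'I_n <- enum 'I_n | inU s j i])
        (Some (fun _ => None)) (iota 0 t.+1).

Definition Lset (N : nat) (V : finType) (n : nat) (u : 'I_n -> V) (E : rel V)
  (f : {set 'I_N} -> {set 'I_N}) (s : nat) (phi : V -> option 'I_N) (j : nat)
  : {set 'I_N} :=
  \bigcup_(v | v \in Ule u s j) \bigcup_(w | E v w && (w \in Ule u s j))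
     match phi v, phi w with
     | Some a, Some b => f [set a; b]
     | _, _ => set0
     end.

Definition rij (N : nat) (f : {set 'I_N} -> {set 'I_N}) (X' : nat -> {set 'I_N})
  (i j : nat) : nat :=
  #|[set p : 'I_N * 'I_N | [&& p.1 \in X' i, p.2 \in X' j, p.1 != p.2 &
       ~~ [disjoint f [set p.1; p.2] & Xle X' j]]]|.

From mathcomp Require Import all_boot zify.
Set Implicit Arguments. Unset Strict Implicit. Unset Printing Implicit Defensive.

(* Let D_0 = |U_0| and, for j >= 1, let D_j be the maximum degree in U_j.  Call y in X'_i
   heavy if for some j >= i more than |U_j| / D_j elements x of X'_j have f({y, x}) meeting
   X'_{<= j}.  Degrees do not increase along u, so |U_(j+1)| D_(j+1) <= 2 sum_(v in U_j) d(v) and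
   sum_j |U_j| D_j <= m + 4m; hence (P3) leaves at most |U_i| heavy elements in X'_i.
   Let X_j be X'_j minus its heavy elements and, for j >= 1, minus the set L of the run on
   X_0, ..., X_(j-1); by (P1) and (P2) it keeps at least 2 |U_j| elements.  When a vertex of
   U_j is processed, (b) holds on all of X_j, (a) excludes fewer than |U_j| elements, and each
   of its at most D_j earlier neighbours excludes at most |U_j| / D_j elements through (c);
   so the algorithm never fails.  For an edge vw with v before w in U_j, condition (c) keeps
   f({phi v, phi w}) away from the images of U_{<= j}, and (b) from those of later parts. *)

Lemma card_bigcup_le (T I : finType) (P : pred I) (F : I -> {set T}) :
  #|\bigcup_(i | P i) F i| <= \sum_(i | P i) #|F i|.
Proof.
elim/big_ind2: _ => // [|A1 n1 A2 n2 h1 h2]; first by rewrite cards0.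
exact: leq_trans (leq_card_setU _ _).1 (leq_add h1 h2).
Qed.

Lemma card_pairs (T1 T2 : finType) (P : T1 -> T2 -> bool) :
  #|[set p : T1 * T2 | P p.1 p.2]| = \sum_(x : T1) #|[set y | P x y]|.
Proof.
rewrite (eq_bigr (fun x => \sum_(y | P x y) 1)) => [|x _]; last first.
  by rewrite -sum1_card; apply: eq_bigl => y; rewrite inE.
by rewrite pair_big_dep sum1_card; apply: eq_card => p; rewrite inE.
Qed.

Lemma sum_deg_le (V : finType) (E : rel V) : irreflexive E ->
  \sum_v deg E v <= 2 * #|edges E|.
Proof.
move=> Eirr; rewrite -[\sum_v _]card_pairs.
(* An edge together with an orientation determines the pair. *)
pose F (p : V * V) := ([set p.1; p.2], enum_rank p.1 < enum_rank p.2).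
have F_inj : {in [set p : V * V | E p.1 p.2] &, injective F}.
  move=> [a b] [c d]; rewrite !inE /= => Eab Ecd [eq_ab_cd eq_lt].
  have neq_ab : a != b by apply: contraTneq Eab => ->; rewrite Eirr.
  have: a \in [set c; d] by rewrite -eq_ab_cd set21.
  have: b \in [set c; d] by rewrite -eq_ab_cd set22.
  case/set2P => eb /set2P[] ea; subst a b; rewrite ?eqxx // in neq_ab *.
  move: eq_lt neq_ab; rewrite -(inj_eq enum_rank_inj) -(inj_eq val_inj) /=.
  by case: ltngtP.
have -> : 2 = #|[set: bool]| by rewrite cardsT card_bool.
rewrite -(card_in_imset F_inj) mulnC -cardsX.
apply/subset_leq_card/subsetP => q /imsetP[p]; rewrite inE => Ep ->.
rewrite !inE /= andbT; apply/existsP; exists p.1; apply/existsP; exists p.2.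
by rewrite Ep eqxx.
Qed.

Lemma filter_iota_range a b c : a <= b -> b <= c ->
  [seq k <- iota 0 c | (a <= k) && (k < b)] = iota a (b - a).
Proof.
move=> le_ab le_bc; have -> : c = a + ((b - a) + (c - b)) by lia.
rewrite !iotaD !filter_cat add0n.
rewrite (@eq_in_filter _ _ pred0) ?filter_pred0; last first.
  by move=> k; rewrite mem_iota => /andP[_ ?]; apply/negbTE; lia.
rewrite (@eq_in_filter _ _ predT) ?filter_predT; last first.
  by move=> k; rewrite mem_iota => /andP[-> ?] /=; lia.
rewrite (@eq_in_filter _ _ pred0) ?filter_pred0 ?cats0 //.
by move=> k; rewrite mem_iota => /andP[? _]; apply/negbTE; lia.
Qed.

Lemma eq_in_foldl (S : eqType) (R : Type) (F1 F2 : R -> S -> R) z (r : seq S) :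
  (forall st x, x \in r -> F1 st x = F2 st x) -> foldl F1 z r = foldl F2 z r.
Proof.
elim: r z => [//|x r IH] z eqF /=; rewrite eqF ?mem_head //.
by apply: IH => st y ry; apply: eqF; rewrite inE ry orbT.
Qed.

Section Levels.
Variable s : nat.

Definition lo (j : nat) : nat := if j is j'.+1 then s * 2 ^ j' else 0.
Definition hi (j : nat) : nat := s * 2 ^ j.

Lemma inUE j i : inU s j i = (lo j <= i) && (i < hi j).
Proof. by case: j => [|j] //=; rewrite /hi expn0 muln1. Qed.

Lemma lo_le_hi j : lo j <= hi j.
Proof. by case: j => [|j] //=; rewrite /hi expnS leq_mul2l leq_pmull ?orbT. Qed.

Lemma hi_le_lo i j : i < j -> hi i <= lo j.
Proof. by case: j => [//|j] /= lt_ij; rewrite /hi leq_mul2l leq_pexp2l ?orbT. Qed.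

Lemma inU_mono i j a b : inU s i a -> inU s j b -> a <= b -> i <= j.
Proof.
rewrite !inUE => /andP[a_lo _] /andP[_ b_hi] le_ab.
rewrite leqNgt; apply/negP => /hi_le_lo; lia.
Qed.

Lemma inU_uniq i j a : inU s i a -> inU s j a -> i = j.
Proof.
by move=> ia ja; apply/eqP; rewrite eqn_leq (inU_mono ia ja) // (inU_mono ja ia).
Qed.

Lemma inU_cover T k : k < hi T -> exists2 j, j <= T & inU s j k.
Proof.
elim: T => [|T IH] k_hi; first by exists 0; rewrite // inUE.
have [/IH[j le_jT kj]|hi_k] := ltnP k (hi T); first by exists j => //; exact: leqW.
by exists T.+1; rewrite // inUE hi_k.
Qed.

End Levels.

Lemma XleP N (Xs : nat -> {set 'I_N}) j x :
  reflect (exists2 i, i <= j & x \in Xs i) (x \in Xle Xs j).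
Proof.
apply: (iffP bigcupP) => [[i _ xi]|[i le_ij xi]]; first by exists i => //; rewrite -ltnS.
by exists (Ordinal (le_ij : i < j.+1)).
Qed.

Lemma Xle_sub N (A B : nat -> {set 'I_N}) j :
  (forall i, i <= j -> A i \subset B i) -> Xle A j \subset Xle B j.
Proof.
move=> AB; apply/subsetP => x /XleP[i le_ij xA]; apply/XleP; exists i => //.
exact: subsetP (AB i le_ij) x xA.
Qed.

Section Embedding.
Variables (N : nat) (f : {set 'I_N} -> {set 'I_N}).
Variables (V : finType) (E : rel V) (n s : nat).
Variables (u : 'I_n -> V) (ui : V -> 'I_n).
Hypotheses (uK : cancel u ui) (uiK : cancel ui u).

Lemma precE v w : prec u v w = (ui v < ui w).
Proof.
apply/existsP/idP => [[i /existsP[k /and3P[/eqP <- /eqP <-]]]|lt_vw]; first by rewrite !uK.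
by exists (ui v); apply/existsP; exists (ui w); rewrite !uiK !eqxx.
Qed.

Lemma UsetE j v : (v \in Uset u s j) = inU s j (ui v).
Proof.
rewrite inE; apply/existsP/idP => [[i /andP[/eqP <-]]|vj]; first by rewrite uK.
by exists (ui v); rewrite uiK eqxx.
Qed.

Lemma Uset_uniq i j v : v \in Uset u s i -> v \in Uset u s j -> i = j.
Proof. by rewrite !UsetE; apply: inU_uniq. Qed.

Lemma Uset_mono i j v w : v \in Uset u s i -> w \in Uset u s j -> ui v <= ui w -> i <= j.
Proof. by rewrite !UsetE; apply: inU_mono. Qed.

Lemma Ult_lo j v : v \in Ult u s j -> ui v < lo s j.
Proof.
case/bigcupP=> i _; rewrite UsetE inUE => /andP[_ /leq_trans]; apply.
exact: hi_le_lo (ltn_ord i).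
Qed.

Lemma mem_Ult i j v : i < j -> v \in Uset u s i -> v \in Ult u s j.
Proof. by move=> lt_ij vi; apply/bigcupP; exists (Ordinal lt_ij). Qed.

Lemma map_val_part j : hi s j <= n ->
  map val [seq i : 'I_n <- enum 'I_n | inU s j i] = iota (lo s j) (hi s j - lo s j).
Proof.
move=> hi_n; rewrite -[[seq _ <- _ | _]]/[seq i <- enum 'I_n | preim val (inU s j) i].
rewrite -filter_map val_enum_ord.
rewrite (eq_filter (a2 := fun k => (lo s j <= k) && (k < hi s j))) => [|k]; last exact: inUE.
exact: filter_iota_range (lo_le_hi s j) hi_n.
Qed.

Lemma card_Uset j : hi s j <= n -> #|Uset u s j| = hi s j - lo s j.
Proof.
move=> hi_n; have -> : Uset u s j = u @: [set i : 'I_n | inU s j i].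
  apply/setP => v; rewrite UsetE; apply/idP/imsetP => [vj|[i]].
    by exists (ui v); rewrite ?inE ?uiK.
  by rewrite inE => ij ->; rewrite uK.
rewrite card_imset; last exact: can_inj uK.
rewrite -(size_iota (lo s j) (hi s j - lo s j)) -(map_val_part hi_n) size_map size_filter.
by rewrite cardsE cardE size_filter -enumT; apply: eq_count => i; rewrite inE.
Qed.

Lemma Emb_ext (A B : nat -> {set 'I_N}) t :
  (forall i, i <= t -> A i = B i) -> Emb u E f s A t = Emb u E f s B t.
Proof.
move=> eqAB; apply: eq_in_foldl => st j; rewrite mem_iota ltnS => /andP[_ le_jt].
have eqXle : Xle A j = Xle B j.
  by apply: eq_bigr => i _; apply: eqAB; apply: leq_trans le_jt; rewrite -ltnS.
by rewrite /emb_step /cand eqAB ?eqXle.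
Qed.

Lemma EmbS Xs t : Emb u E f s Xs t.+1 =
  foldl (emb_step u E f s Xs t.+1) (Emb u E f s Xs t) [seq i : 'I_n <- enum 'I_n | inU s t.+1 i].
Proof. by rewrite /Emb -[t.+2]addn1 iotaD foldl_cat. Qed.

Lemma Ult_neq i v (k : 'I_n) : v \in Ult u s i -> lo s i <= k -> v != u k.
Proof.
move=> /Ult_lo lt_v le_k; apply/eqP => def_v.
by move: lt_v; rewrite def_v uK ltnNge le_k.
Qed.

Definition extend (phi : V -> option 'I_N) w x : V -> option 'I_N :=
  fun v => if v == w then Some x else phi v.

Lemma candP (Xs : nat -> {set 'I_N}) j (phi : V -> option 'I_N) (k : 'I_n) x : reflect
  [/\ forall v, ui v < k -> phi v != Some x,
      forall v w a b, E v w -> v \in Ult u s j -> w \in Ult u s j ->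
        phi v = Some a -> phi w = Some b -> x \notin f [set a; b] &
      forall v a, E v (u k) -> ui v < k -> phi v = Some a ->
        [disjoint f [set a; x] & Xle Xs j]]
  (cand u E f s Xs j phi (u k) x).
Proof.
apply: (iffP and3P) => [[/forallP candA /forallP candB /forallP candC]|[candA candB candC]].
  split.
  - by move=> v; move: (candA v); rewrite precE uK => /implyP.
  - move=> v w a b Evw vj wj pv pw.
    by move/forallP: (candB v) => /(_ w); rewrite Evw vj wj pv pw.
  - by move=> v a Ev lt_vk pv; move: (candC v); rewrite Ev precE uK lt_vk pv.
split.
- by apply/forallP => v; rewrite precE uK; apply/implyP; apply: candA.
- apply/forallP => v; apply/forallP => w; apply/implyP => /and3P[Evw vj wj].
  by case pv: (phi v) => [a|//]; case pw: (phi w) => [b|//]; apply: candB pv pw.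
- apply/forallP => v; rewrite precE uK; apply/implyP => /andP[Ev lt_vk].
  by case pv: (phi v) => [a|//]; apply: candC pv.
Qed.

Lemma emb_stepP (Xs : nat -> {set 'I_N}) j phi (k : 'I_n) x :
  (x \in Xs j) && cand u E f s Xs j phi (u k) x ->
  exists2 y, emb_step u E f s Xs j (Some phi) k = Some (extend phi (u k) y) &
    (y \in Xs j) && cand u E f s Xs j phi (u k) y.
Proof.
move=> cand_x; rewrite /emb_step.
have : x \in [seq y <- enum 'I_N | (y \in Xs j) && cand u E f s Xs j phi (u k) y].
  by rewrite mem_filter cand_x mem_enum.
case def_c: [seq y <- enum 'I_N | _] => [//|y c] _; exists y => //.
by move: (mem_head y c); rewrite -def_c mem_filter => /andP[].
Qed.

(* The state once u_0, ..., u_(c-1) are embedded; [inv_edge] and [inv_later] are what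
   conditions (c) and (b) have guaranteed so far. *)
Record emb_inv (Xs : nat -> {set 'I_N}) (phi : V -> option 'I_N) (c : nat) : Prop := EmbInv {
  inv_dom : forall v, (phi v != None) = (ui v < c);
  inv_part : forall v a j, phi v = Some a -> v \in Uset u s j -> a \in Xs j;
  inv_inj : forall v w a, phi v = Some a -> phi w = Some a -> v = w;
  inv_edge : forall v w a b j, E v w -> phi v = Some a -> phi w = Some b -> ui v < ui w ->
    w \in Uset u s j -> [disjoint f [set a; b] & Xle Xs j];
  inv_later : forall v w z a b x j, E v w -> phi v = Some a -> phi w = Some b ->
    phi z = Some x -> z \in Uset u s j -> v \in Ult u s j -> w \in Ult u s j ->
    x \notin f [set a; b] }.

(* Condition (b) holds on all of X_j: this is what removing L from X'_j achieves. *)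
Definition avoids_edge_images (Xs : nat -> {set 'I_N}) (phi : V -> option 'I_N) j : Prop :=
  forall x v w a b, x \in Xs j -> E v w -> v \in Ult u s j -> w \in Ult u s j ->
    phi v = Some a -> phi w = Some b -> x \notin f [set a; b].

Lemma emb_inv_lt Xs phi c v a : emb_inv Xs phi c -> phi v = Some a -> ui v < c.
Proof. by move=> inv pv; rewrite -(inv_dom inv) pv. Qed.

Section Extend.
Variables (Xs : nat -> {set 'I_N}) (phi : V -> option 'I_N) (j : nat) (k : 'I_n) (x : 'I_N).
Hypotheses (kj : inU s j k) (inv : emb_inv Xs phi k) (xj : x \in Xs j).
Hypothesis candA : forall v, ui v < k -> phi v != Some x.
Hypothesis candB : forall v w a b, E v w -> v \in Ult u s j -> w \in Ult u s j ->
  phi v = Some a -> phi w = Some b -> x \notin f [set a; b].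
Hypothesis candC : forall v a, E v (u k) -> ui v < k -> phi v = Some a ->
  [disjoint f [set a; x] & Xle Xs j].

Local Notation phi' := (extend phi (u k) x).

Lemma extend_new : phi' (u k) = Some x.
Proof. by rewrite /extend eqxx. Qed.

Lemma extend_old v : v != u k -> phi' v = phi v.
Proof. by rewrite /extend => /negbTE ->. Qed.

Lemma lo_le_k : lo s j <= k.
Proof. by move: kj; rewrite inUE => /andP[]. Qed.

Lemma part_of_k i : u k \in Uset u s i -> i = j.
Proof. by rewrite UsetE uK => /(inU_uniq kj). Qed.

Lemma extend_dom v : (phi' v != None) = (ui v < k.+1).
Proof.
have [->|vk] := eqVneq v (u k); first by rewrite extend_new uK ltnSn.
rewrite extend_old // (inv_dom inv) [RHS]ltnS [RHS]leq_eqVlt orb_idl // => /eqP/val_inj def_v.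
by rewrite -def_v uiK eqxx in vk.
Qed.

Lemma extend_part v a i : phi' v = Some a -> v \in Uset u s i -> a \in Xs i.
Proof.
have [->|vk] := eqVneq v (u k); last by rewrite extend_old //; apply: (inv_part inv).
by rewrite extend_new => -[<-] /part_of_k ->.
Qed.

Lemma extend_inj v w a : phi' v = Some a -> phi' w = Some a -> v = w.
Proof.
have [->|vk] := eqVneq v (u k); have [->|wk] := eqVneq w (u k) => //;
  rewrite ?extend_new ?extend_old //.
- by move=> [<-] pw; move: (candA (emb_inv_lt inv pw)); rewrite pw eqxx.
- by move=> pv [def_a]; move: (candA (emb_inv_lt inv pv)); rewrite pv def_a eqxx.
- exact: (inv_inj inv).
Qed.

Lemma extend_edge v w a b i : E v w -> phi' v = Some a -> phi' w = Some b ->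
  ui v < ui w -> w \in Uset u s i -> [disjoint f [set a; b] & Xle Xs i].
Proof.
have [->|vk] := eqVneq v (u k); have [->|wk] := eqVneq w (u k);
  rewrite ?extend_new ?extend_old ?uK // => Evw; first by rewrite ltnn.
- by move=> _ pw /ltn_trans/(_ (emb_inv_lt inv pw)); rewrite ltnn.
- by move=> pv [<-] lt_vk /part_of_k ->; apply: candC Evw lt_vk pv.
- exact: (inv_edge inv).
Qed.

Lemma extend_later v w z a b c i : E v w -> phi' v = Some a -> phi' w = Some b ->
  phi' z = Some c -> z \in Uset u s i -> v \in Ult u s i -> w \in Ult u s i ->
  c \notin f [set a; b].
Proof.
move=> Evw + + + zi vi wi.
have old_vw : lo s i <= k -> phi' v = phi v /\ phi' w = phi w.
  by move=> le_k; rewrite !extend_old ?(Ult_neq vi) ?(Ult_neq wi).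
have [def_z|zk] := eqVneq z (u k).
  move: zi; rewrite def_z extend_new => /part_of_k def_i; subst i.
  by case: (old_vw lo_le_k) => -> -> pv pw [<-]; apply: candB Evw vi wi pv pw.
rewrite (extend_old zk) => + + pz; have lt_zk := emb_inv_lt inv pz.
have lo_z : lo s i <= ui z by move: zi; rewrite UsetE inUE => /andP[].
case: (old_vw (ltnW (leq_ltn_trans lo_z lt_zk))) => -> -> pv pw.
exact: (inv_later inv Evw pv pw pz zi vi wi).
Qed.

Lemma emb_inv_extend : emb_inv Xs phi' k.+1.
Proof.
split; [exact: extend_dom | exact: extend_part | exact: extend_inj
  | exact: extend_edge | exact: extend_later].
Qed.

Lemma avoids_extend : avoids_edge_images Xs phi j -> avoids_edge_images Xs phi' j.
Proof.
move=> avoid y v w a b yj Evw vi wi.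
rewrite !extend_old ?(Ult_neq vi lo_le_k) ?(Ult_neq wi lo_le_k) //; exact: avoid.
Qed.

End Extend.

Variables (T : nat) (X' : nat -> {set 'I_N}).
Hypothesis hnT : n = s * 2 ^ T.
Hypothesis hEsym : symmetric E.
Hypothesis hX'disj : forall i j, i <= T -> j <= T -> i != j -> [disjoint X' i & X' j].

Lemma hi_le_n j : j <= T -> hi s j <= n.
Proof. by move=> le_jT; rewrite hnT /hi leq_mul2l leq_pexp2l ?orbT. Qed.

Lemma Uset_cover v : exists2 j, j <= T & v \in Uset u s j.
Proof.
have [j le_jT vj] : exists2 j, j <= T & inU s j (ui v).
  by apply: inU_cover; rewrite /hi -hnT.
by exists j; rewrite ?UsetE.
Qed.

(* Every vertex before a vertex of U_0 lies in U_0, whence the bound D_0 = |U_0|. *)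
Definition Dmax (j : nat) : nat :=
  if j is 0 then #|Uset u s 0| else \max_(v in Uset u s j) deg E v.

Definition conflicts (j : nat) (y : 'I_N) : {set 'I_N} :=
  [set x in X' j | (y != x) && ~~ [disjoint f [set y; x] & Xle X' j]].

Record admissible (Xs : nat -> {set 'I_N}) : Prop := Admissible {
  adm_sub : forall i, i <= T -> Xs i \subset X' i;
  adm_light : forall i j y, i <= j -> j <= T -> y \in Xs i ->
    #|conflicts j y| * Dmax j <= #|Uset u s j| }.

Section Candidate.
Variables (Xs : nat -> {set 'I_N}) (phi : V -> option 'I_N) (j : nat) (k : 'I_n).
Hypotheses (le_jT : j <= T) (kj : inU s j k) (adm : admissible Xs).
Hypotheses (inv : emb_inv Xs phi k) (avoid : avoids_edge_images Xs phi j).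

Local Notation used := (\bigcup_(v in Uset u s j :\ u k) oapp set1 set0 (phi v)).
Local Notation earlier := [set v | E v (u k) && (ui v < k)].
Local Notation blocked := (\bigcup_(v in earlier) oapp (conflicts j) set0 (phi v)).

Lemma uk_part : u k \in Uset u s j.
Proof. by rewrite UsetE uK. Qed.

Lemma image_used v x : x \in Xs j -> ui v < k -> phi v = Some x -> x \in used.
Proof.
move=> xj lt_vk pv; have [i le_iT vi] := Uset_cover v.
have def_i : i = j.
  apply/eqP; apply: contraTT (subsetP (adm_sub adm le_jT) x xj) => ne_ij.
  rewrite (disjointFr (hX'disj le_iT le_jT ne_ij)) //.
  exact: subsetP (adm_sub adm le_iT) x (inv_part inv pv vi).
subst i; apply/bigcupP; exists v; last by rewrite pv /= set11.
by rewrite in_setD1 vi andbT; apply: contraTneq lt_vk => ->; rewrite uK ltnn.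
Qed.

Lemma card_used : #|used| < #|Uset u s j|.
Proof.
apply: leq_ltn_trans (card_bigcup_le _ _) _.
apply: (@leq_ltn_trans (\sum_(v in Uset u s j :\ u k) 1)).
  by apply: leq_sum => v _; case: (phi v) => [a|] /=; rewrite ?cards1 ?cards0.
by rewrite sum1_card [X in _ < X](cardsD1 (u k)) uk_part.
Qed.

Lemma card_earlier : #|earlier| <= Dmax j.
Proof.
rewrite /Dmax; move: kj uk_part; case: (j) => [|j'] kj' uk_j'.
  apply/subset_leq_card/subsetP => v; rewrite inE UsetE => /andP[_ lt_vk].
  exact: ltn_trans lt_vk kj'.
apply: leq_trans (leq_bigmax_cond _ uk_j').
by apply/subset_leq_card/subsetP => v; rewrite !inE hEsym => /andP[].
Qed.

Lemma card_conflicts_image v : ui v < k ->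
  #|oapp (conflicts j) set0 (phi v)| * Dmax j <= #|Uset u s j|.
Proof.
move=> lt_vk; case pv: (phi v) => [a|]; last by rewrite cards0.
have [i le_iT vi] := Uset_cover v.
apply: (adm_light adm _ le_jT (inv_part inv pv vi)).
by apply: Uset_mono vi uk_part _; rewrite uK ltnW.
Qed.

Lemma card_blocked : #|blocked| <= #|Uset u s j|.
Proof.
apply: leq_trans (card_bigcup_le _ _) _.
have [D0|Dpos] := posnP (Dmax j).
  suff -> : earlier = set0 by rewrite big_set0.
  by apply/eqP; rewrite -cards_eq0 -leqn0 -D0 card_earlier.
rewrite -(leq_pmul2r Dpos) big_distrl /=.
apply: leq_trans (_ : \sum_(v in earlier) #|Uset u s j| <= _).
  by apply: leq_sum => v; rewrite inE => /andP[_ /card_conflicts_image].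
by rewrite sum_nat_const mulnC leq_mul2l card_earlier orbT.
Qed.

Lemma cand_unused x : x \in Xs j -> x \notin used -> x \notin blocked ->
  cand u E f s Xs j phi (u k) x.
Proof.
move=> xj x_unused x_unblocked; apply/candP; split.
- move=> v lt_vk; apply: contraNneq x_unused; exact: image_used xj lt_vk.
- by move=> v w a b Evw vj wj pv pw; apply: avoid xj Evw vj wj pv pw.
move=> v a Evk lt_vk pv; have [def_a|ne_ax] := eqVneq a x.
  by move: x_unused; rewrite (image_used xj lt_vk) // pv def_a.
apply: contraNT x_unblocked => meet; apply/bigcupP; exists v; first by rewrite inE Evk lt_vk.
rewrite pv /= inE (subsetP (adm_sub adm le_jT) x xj) ne_ax /=.
apply: contra meet; apply: disjointWr; apply: Xle_sub => i le_ij.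
exact: (adm_sub adm (leq_trans le_ij le_jT)).
Qed.

Lemma exists_cand : 2 * #|Uset u s j| <= #|Xs j| ->
  exists x, (x \in Xs j) && cand u E f s Xs j phi (u k) x.
Proof.
move=> big_Xs; have lt_card : #|used :|: blocked| < #|Xs j|.
  apply: leq_trans big_Xs; apply: leq_ltn_trans (leq_card_setU _ _).1 _.
  by rewrite mul2n -addnn -addSn leq_add ?card_used ?card_blocked.
have /subsetPn[x xj] : ~~ (Xs j \subset used :|: blocked).
  by apply: contraTN lt_card => /subset_leq_card; rewrite leqNgt.
rewrite inE negb_or => /andP[x_unused x_unblocked].
by exists x; rewrite xj cand_unused.
Qed.

End Candidate.

Lemma emb_step_inv Xs phi j (k : 'I_n) : j <= T -> inU s j k -> admissible Xs ->
  2 * #|Uset u s j| <= #|Xs j| -> emb_inv Xs phi k -> avoids_edge_images Xs phi j ->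
  exists phi', [/\ emb_step u E f s Xs j (Some phi) k = Some phi',
    emb_inv Xs phi' k.+1 & avoids_edge_images Xs phi' j].
Proof.
move=> le_jT kj adm big_Xs inv avoid.
have [x cand_x] := exists_cand le_jT kj adm inv avoid big_Xs.
have [y -> /andP[yj /candP[candA candB candC]]] := emb_stepP cand_x.
exists (extend phi (u k) y); split=> //.
  exact: emb_inv_extend kj inv yj candA candB candC.
exact: avoids_extend kj avoid.
Qed.

Lemma emb_level Xs j phi c (p : seq 'I_n) : j <= T -> admissible Xs ->
  2 * #|Uset u s j| <= #|Xs j| -> lo s j <= c -> c <= hi s j ->
  map val p = iota c (hi s j - c) -> emb_inv Xs phi c -> avoids_edge_images Xs phi j ->
  exists2 phi', foldl (emb_step u E f s Xs j) (Some phi) p = Some phi' &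
    emb_inv Xs phi' (hi s j).
Proof.
move=> le_jT adm big_Xs; elim: p phi c => [|k p IH] phi c lo_c c_hi.
  by case def_len: (hi s j - c) => // _; exists phi; rewrite // (_ : hi s j = c) //; lia.
case def_len: (hi s j - c) => [//|len] [def_k p_iota] inv avoid; subst c.
have kj : inU s j k by rewrite inUE lo_c; lia.
have [phi1 [Estep inv1 avoid1]] := emb_step_inv le_jT kj adm big_Xs inv avoid.
have [|||phi' run_p inv'] := IH phi1 k.+1 _ _ _ inv1 avoid1; try lia.
  by rewrite p_iota; congr iota; lia.
by exists phi' => //; rewrite -Estep in run_p.
Qed.

Lemma Emb_run Xs : admissible Xs -> 2 * #|Uset u s 0| <= #|Xs 0| ->
  (forall j phi, j < T -> Emb u E f s Xs j = Some phi ->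
     avoids_edge_images Xs phi j.+1 /\ 2 * #|Uset u s j.+1| <= #|Xs j.+1|) ->
  forall t, t <= T -> exists2 phi, Emb u E f s Xs t = Some phi & emb_inv Xs phi (hi s t).
Proof.
move=> adm big_Xs0 next; elim=> [|t IH] le_tT.
  apply: (emb_level (c := 0)) (map_val_part (hi_le_n le_tT)) _ _ => //.
have [phi Emb_t inv] := IH (ltnW le_tT).
have [avoid big_Xs] := next t phi le_tT Emb_t.
rewrite EmbS Emb_t; apply: (emb_level (c := lo s t.+1)) avoid => //.
- exact: lo_le_hi.
- exact: map_val_part (hi_le_n le_tT).
Qed.

Hypothesis hEirr : irreflexive E.

Lemma emb_inv_edge_free Xs phi g : emb_inv Xs phi (hi s T) ->
  (forall v, phi v = Some (g v)) ->
  forall v w, E v w -> [disjoint f [set g v; g w] & g @: [set: V]].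
Proof.
move=> inv def_g v w; wlog lt_vw : v w / ui v < ui w => [wlog_vw|] Evw.
  case: (ltngtP (ui v) (ui w)) => [lt_vw|lt_wv|/val_inj eq_vw].
  - exact: wlog_vw.
  - by rewrite setUC; apply: wlog_vw lt_wv _; rewrite hEsym.
  - by move: Evw; rewrite -[v]uiK eq_vw uiK hEirr.
(* g z is kept out by (c) at the part of w, or by (b) at the part of z if that comes later. *)
rewrite disjoints_subset; apply/subsetP => x gz_f; rewrite inE.
apply/negP => /imsetP[z _ def_x]; subst x.
have [j le_jT wj] := Uset_cover w; have [jz le_jzT zj] := Uset_cover z.
have [le_jz_j|lt_j_jz] := leqP jz j.
  have gz_j : g z \in Xle Xs j by apply/XleP; exists jz; rewrite ?(inv_part inv (def_g z)).
  by rewrite (disjointFr (inv_edge inv Evw (def_g v) (def_g w) lt_vw wj) gz_f) in gz_j.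
have [jv _ vj] := Uset_cover v.
have le_jv_j : jv <= j := Uset_mono vj wj (ltnW lt_vw).
have vjz := mem_Ult (leq_ltn_trans le_jv_j lt_j_jz) vj.
by move: gz_f; rewrite (negbTE (inv_later inv Evw (def_g v) (def_g w) (def_g z) zj vjz
  (mem_Ult lt_j_jz wj))).
Qed.

Variable m : nat.
Hypotheses (hm : #|edges E| = m) (hs : m = s * s).
Hypothesis hdeg : forall i k : 'I_n, i <= k -> deg E (u k) <= deg E (u i).

Lemma card_U0 : #|Uset u s 0| = s.
Proof. by rewrite card_Uset ?hi_le_n // /hi expn0 muln1 subn0. Qed.

Lemma card_Uset_succ j : j < T -> #|Uset u s j.+1| <= 2 * #|Uset u s j|.
Proof.
move=> lt_jT; rewrite !card_Uset ?hi_le_n ?(ltnW lt_jT) //.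
by case: j lt_jT => [|j] _; rewrite /hi /lo ?expnS ?expn0; nia.
Qed.

Lemma Dmax_succ_le j v : v \in Uset u s j -> Dmax j.+1 <= deg E v.
Proof.
move=> vj; apply/bigmax_leqP => w wj; rewrite -(uiK v) -(uiK w); apply: hdeg.
by rewrite leqNgt; apply/negP => /ltnW/(Uset_mono wj vj); rewrite ltnn.
Qed.

Lemma sum_part_deg : \sum_(j < T) \sum_(v in Uset u s j) deg E v <= \sum_v deg E v.
Proof.
rewrite (exchange_big_dep xpredT) //=; apply: leq_sum => v _.
rewrite sum_nat_const -[X in _ <= X]mul1n leq_mul2r; apply/orP; right.
apply/card_le1_eqP => i j vi vj; apply/val_inj; exact: (@Uset_uniq j i v vj vi).
Qed.

Lemma sum_Uset_Dmax : \sum_(j < T.+1) #|Uset u s j| * Dmax j <= 5 * m.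
Proof.
rewrite big_ord_recl [X in X + _]/= card_U0 -hs.
rewrite (eq_bigr (fun i : 'I_T => #|Uset u s i.+1| * Dmax i.+1)) => [|i _]; last by rewrite lift0.
have part_le j : j < T -> #|Uset u s j.+1| * Dmax j.+1 <= 2 * \sum_(v in Uset u s j) deg E v.
  move=> lt_jT; apply: leq_trans (leq_mul (card_Uset_succ lt_jT) (leqnn _)) _.
  rewrite -mulnA leq_mul2l -sum_nat_const; apply/orP; right.
  by apply: leq_sum => v; apply: Dmax_succ_le.
have := sum_deg_le hEirr; rewrite hm => sum_deg.
rewrite (mulSn 4) leq_add2l.
apply: leq_trans (_ : \sum_(i < T) 2 * \sum_(v in Uset u s i) deg E v <= _).
  by apply: leq_sum => i _; apply: part_le.
rewrite -big_distrr -[4]/(2 * 2) -mulnA leq_mul2l /=.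
exact: leq_trans sum_part_deg sum_deg.
Qed.

Hypothesis P1 : forall j, j <= T ->
  39 * #|Uset u s j| < 10 * #|X' j| /\ 10 * #|X' j| < 41 * #|Uset u s j|.
Hypothesis P3 : forall i j, i <= j -> j <= T ->
  5 * m * rij f X' i j <= #|Uset u s i| * #|Uset u s j| ^ 2.

Lemma Uset_gt0 j : j <= T -> 0 < #|Uset u s j|.
Proof. by move=> le_jT; have [_] := P1 le_jT; case: #|Uset u s j|. Qed.

Lemma m_gt0 : 0 < m.
Proof. by rewrite hs -card_U0 muln_gt0 andbb Uset_gt0. Qed.

Definition heavy_at (i j : nat) : {set 'I_N} :=
  [set y in X' i | #|Uset u s j| < #|conflicts j y| * Dmax j].

Definition heavy (i : nat) : {set 'I_N} := \bigcup_(j < T.+1 | i <= j) heavy_at i j.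

Lemma sum_conflicts i j : \sum_(y in X' i) #|conflicts j y| <= rij f X' i j.
Proof.
rewrite /rij (card_pairs (fun x y => [&& x \in X' i, y \in X' j, x != y &
  ~~ [disjoint f [set x; y] & Xle X' j]])) big_mkcond /=.
by apply: leq_sum => x _; case: ifP.
Qed.

Lemma card_heavy_at i j : i <= j -> j <= T ->
  5 * m * #|heavy_at i j| <= #|Uset u s i| * #|Uset u s j| * Dmax j.
Proof.
move=> le_ij le_jT.
have heavy_sum : #|heavy_at i j| * #|Uset u s j| <= rij f X' i j * Dmax j.
  rewrite -sum_nat_const.
  apply: leq_trans (_ : \sum_(y in heavy_at i j) #|conflicts j y| * Dmax j <= _).
    by apply: leq_sum => y; rewrite inE => /andP[_ /ltnW].
  apply: leq_trans (_ : \sum_(y in X' i) #|conflicts j y| * Dmax j <= _).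
    rewrite [X in X <= _]big_mkcond [X in _ <= X]big_mkcond /=.
    by apply: leq_sum => y _; case: ifP => //; rewrite inE => /andP[->].
  by rewrite -big_distrl leq_mul2r sum_conflicts orbT.
rewrite -(leq_pmul2r (Uset_gt0 le_jT)) -mulnA.
apply: leq_trans (leq_mul (leqnn _) heavy_sum) _.
rewrite mulnA; apply: leq_trans (leq_mul (P3 le_ij le_jT) (leqnn _)) _.
by apply: eq_leq; rewrite -mulnn; lia.
Qed.

Lemma card_heavy i : i <= T -> #|heavy i| <= #|Uset u s i|.
Proof.
move=> le_iT; have m5_gt0 : 0 < 5 * m by rewrite muln_gt0 m_gt0.
rewrite -(leq_pmul2l m5_gt0).
apply: leq_trans (leq_mul (leqnn _) (card_bigcup_le _ _)) _.
rewrite big_distrr /=.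
apply: leq_trans (_ : \sum_(j < T.+1 | i <= j) #|Uset u s i| * (#|Uset u s j| * Dmax j) <= _).
  by apply: leq_sum => j le_ij; rewrite mulnA card_heavy_at // -ltnS.
apply: leq_trans (_ : \sum_(j < T.+1) #|Uset u s i| * (#|Uset u s j| * Dmax j) <= _).
  by rewrite [X in _ <= X](bigID (fun j : 'I_T.+1 => i <= j)) leq_addr.
by rewrite -big_distrr /= [X in _ <= X]mulnC leq_mul2l sum_Uset_Dmax orbT.
Qed.

Lemma light_of_not_heavy i j y : i <= j -> j <= T -> y \in X' i -> y \notin heavy i ->
  #|conflicts j y| * Dmax j <= #|Uset u s j|.
Proof.
move=> le_ij le_jT yi; apply: contraNT; rewrite -ltnNge => lt_U.
by apply/bigcupP; exists (Ordinal (le_jT : j < T.+1)); rewrite // inE yi.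
Qed.

Hypothesis P2 : forall j, j < T ->
  forall Xs : nat -> {set 'I_N}, (forall i, i <= j -> Xs i \subset X' i) ->
  forall phi, Emb u E f s Xs j = Some phi ->
  9 * #|Lset u E f s phi j :&: X' j.+1| <= #|X' j.+1|.

(* Xupto t i is X_i for i <= t (junk for i > t). *)
Fixpoint Xupto (t : nat) : nat -> {set 'I_N} :=
  if t is t'.+1 then
    fun i => if i == t then
      X' i :\: heavy i :\: oapp (fun phi => Lset u E f s phi t') set0 (Emb u E f s (Xupto t') t')
    else Xupto t' i
  else fun i => if i == 0 then X' 0 :\: heavy 0 else set0.

Definition Xfinal : nat -> {set 'I_N} := Xupto T.

Lemma Xupto_stable t t' i : i <= t -> t <= t' -> Xupto t' i = Xupto t i.
Proof.
move=> le_it; elim: t' => [|t' IH] le_tt'; first by have -> : t = 0 by lia.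
have [lt_tt'|le_t't] := ltnP t t'.+1; last by have -> : t = t'.+1 by lia.
by rewrite /= ifN ?IH //; lia.
Qed.

Lemma Xfinal_eq i : i <= T -> Xfinal i = Xupto i i.
Proof. exact: Xupto_stable. Qed.

Lemma Emb_Xfinal i : i <= T -> Emb u E f s Xfinal i = Emb u E f s (Xupto i) i.
Proof. by move=> le_iT; apply: Emb_ext => i' le_i'i; apply: Xupto_stable. Qed.

Lemma Xfinal_sub i : i <= T -> Xfinal i \subset X' i :\: heavy i.
Proof.
by move=> le_iT; rewrite Xfinal_eq //; case: i le_iT => [|i] _ /=; rewrite ?eqxx ?subsetDl.
Qed.

Lemma Xfinal_admissible : admissible Xfinal.
Proof.
split=> [i le_iT|i j y le_ij le_jT yi].
  exact: subset_trans (Xfinal_sub le_iT) (subsetDl _ _).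
move: (subsetP (Xfinal_sub (leq_trans le_ij le_jT)) y yi); rewrite !inE => /andP[].
by move/light_of_not_heavy; apply.
Qed.

Lemma card_Xfinal0 : 2 * #|Uset u s 0| <= #|Xfinal 0|.
Proof.
rewrite Xfinal_eq //= cardsD.
have XH_le : #|X' 0 :&: heavy 0| <= #|heavy 0| by apply/subset_leq_card/subsetIr.
have := card_heavy (leq0n T); have [lbX _] := P1 (leq0n T); lia.
Qed.

Lemma Xfinal_next j phi : j < T -> Emb u E f s Xfinal j = Some phi ->
  avoids_edge_images Xfinal phi j.+1 /\ 2 * #|Uset u s j.+1| <= #|Xfinal j.+1|.
Proof.
move=> lt_jT Emb_j.
have def_X : Xfinal j.+1 = X' j.+1 :\: heavy j.+1 :\: Lset u E f s phi j.
  by rewrite Xfinal_eq //= eqxx -Emb_Xfinal ?(ltnW lt_jT) // Emb_j.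
split.
  move=> x v w a b; rewrite def_X inE => /andP[x_L _] Evw vj wj pv pw.
  apply: contra x_L => x_f; apply/bigcupP; exists v => //.
  by apply/bigcupP; exists w; rewrite ?Evw ?pv ?pw.
have sub_j i : i <= j -> Xfinal i \subset X' i.
  by move=> le_ij; exact: (adm_sub Xfinal_admissible (leq_trans le_ij (ltnW lt_jT))).
have L_le := P2 lt_jT sub_j Emb_j.
rewrite def_X !cardsD.
have XH_le : #|X' j.+1 :&: heavy j.+1| <= #|heavy j.+1| by apply/subset_leq_card/subsetIr.
have XL_le : #|(X' j.+1 :\: heavy j.+1) :&: Lset u E f s phi j| <=
             #|Lset u E f s phi j :&: X' j.+1|.
  by apply/subset_leq_card; rewrite setIC setIS ?subsetDl.
have XH_X : #|X' j.+1 :&: heavy j.+1| <= #|X' j.+1| by apply/subset_leq_card/subsetIl.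
have := card_heavy lt_jT; have [lbX _] := P1 lt_jT; lia.
Qed.

Variable l : nat.
Hypothesis hX'X : forall j, j <= T -> X' j \subset Xgood l f.

Lemma embedding_exists :
  exists Xs : nat -> {set 'I_N},
    (forall j, j <= T -> Xs j \subset X' j) /\
    exists (phi : V -> option 'I_N) (g : V -> 'I_N),
      [/\ Emb u E f s Xs T = Some phi,
          forall v, phi v = Some (g v),
          injective g,
          forall v, g v \in Xgood l f &
          forall v w, E v w -> [disjoint f [set g v; g w] & g @: [set: V]]].
Proof.
exists Xfinal; split; first exact: adm_sub Xfinal_admissible.
have [phi Emb_T inv] := Emb_run Xfinal_admissible card_Xfinal0 Xfinal_next (leqnn T).
have [g def_g] : exists g : V -> 'I_N, forall v, phi v = Some (g v).
  apply: (@fin_all_exists V (fun=> 'I_N) (fun v a => phi v = Some a)) => v.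
  case: (phi v) (inv_dom inv v) => [a _|]; first by exists a.
  by rewrite /hi -hnT ltn_ord.
exists phi, g; split=> //.
- by move=> v w eq_g; apply: (inv_inj inv (def_g v)); rewrite eq_g.
- move=> v; have [j le_jT vj] := Uset_cover v.
  apply: subsetP (hX'X le_jT) _ (subsetP (adm_sub Xfinal_admissible le_jT) _ _).
  exact: (inv_part inv (def_g v) vj).
- exact: emb_inv_edge_free inv def_g.
Qed.

End Embedding.

Theorem lemma2p2
  (l N : nat) (f : {set 'I_N} -> {set 'I_N})
  (hl : 1 <= l)
  (hf : forall e : {set 'I_N}, #|e| = 2 -> #|f e| = l /\ [disjoint f e & e])
  (V : finType) (E : rel V) (hEsym : symmetric E) (hEirr : irreflexive E)
  (n m s T : nat)
  (hn : #|V| = n) (hm : #|edges E| = m) (hs : m = s * s)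
  (hT : 1 <= T) (hnT : n = s * 2 ^ T)
  (hiso : 2 * #|[set v | deg E v == 0]| < n)
  (u : 'I_n -> V) (hu : bijective u)
  (hdeg : forall i k : 'I_n, i <= k -> deg E (u k) <= deg E (u i))
  (X' : nat -> {set 'I_N})
  (hX'X : forall j, j <= T -> X' j \subset Xgood l f)
  (hX'disj : forall i j, i <= T -> j <= T -> i != j -> [disjoint X' i & X' j])
  (P1 : forall j, j <= T ->
          39 * #|Uset u s j| < 10 * #|X' j| /\ 10 * #|X' j| < 41 * #|Uset u s j|)
  (P2 : forall j, j < T ->
          forall Xs : nat -> {set 'I_N},
          (forall i, i <= j -> Xs i \subset X' i) ->
          forall phi, Emb u E f s Xs j = Some phi ->
          9 * #|Lset u E f s phi j :&: X' j.+1| <= #|X' j.+1|)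
  (P3 : forall i j, i <= j -> j <= T ->
          5 * m * rij f X' i j <= #|Uset u s i| * #|Uset u s j| ^ 2) :
  exists Xs : nat -> {set 'I_N},
    (forall j, j <= T -> Xs j \subset X' j) /\
    exists (phi : V -> option 'I_N) (g : V -> 'I_N),
      [/\ Emb u E f s Xs T = Some phi,
          forall v, phi v = Some (g v),
          injective g,
          forall v, g v \in Xgood l f &
          forall v w, E v w -> [disjoint f [set g v; g w] & g @: [set: V]]].
Proof.
case: hu => ui uK uiK.
exact: (embedding_exists uK uiK hnT hEsym hX'disj hEirr hm hs hdeg P1 P3 P2 hX'X).
Qed.
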